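(* Fix $\varepsilon\in(0,1/6)$ and $k=3$. Let $g:(0,\infty)\to(0,\infty)$ be any gradient function (any function of distance). There is no function $F:(0,\infty)^4\to\{1,2,3\}$ with the following property: for all $a,b>0$, the coloring of the rectangle $[0,a]\times[0,b]$ that assigns to the point $(x,y)$ the color $F\big(g(d_1),g(d_2),g(d_3),g(d_4)\big)$, where $d_1,\dots,d_4$ are the Euclidean distances from $(x,y)$ to the four corners $(0,0),(a,0),(0,b),(a,b)$, is an $\varepsilon$-approximate French flag. In other words, no algorithm in the concentration model with four point sources at the corners can produce an $\varepsilon$-approximate French flag for all flag dimensions.
   Context: Concentration model in 2D: four sources sit at the corners of the $a\times b$ flag (width $a$ along the $x$-axis, height $b$); each agent's only input is the measured concentration from each source, which is a function of its distance to that source; all agents run the same algorithm and have no other positional information (no coordinates, no knowledge of $a$ or $b$). A $k$-colored coloring of a flag of width $a$ is an $\varepsilon$-approximate flag if for every color $z\in\{1,\dots,k\}$ and every agent at $(x,y)$: (1) if $x\in[(\frac{z-1}{k}+\varepsilon)a,(\frac{z}{k}-\varepsilon)a]$ then the agent has color $z$; (2) if the agent has color $z$ then $x\in[(\frac{z-1}{k}-\varepsilon)a,(\frac{z}{k}+\varepsilon)a]$. For $k=3$ the colors are blue $=1$, white $=2$, red $=3$. *)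

From Stdlib Require Import Reals Lra.
Open Scope R_scope.

Definition edist (x y px py : R) : R := sqrt ((x - px)^2 + (y - py)^2).

(* Agents of the a x b flag: points of [0,a]x[0,b] at positive distance from
   all four corners (the gradient function is only defined on (0,oo)). *)
Definition agent (a b x y : R) : Prop :=
  0 <= x <= a /\ 0 <= y <= b /\
  0 < edist x y 0 0 /\ 0 < edist x y a 0 /\
  0 < edist x y 0 b /\ 0 < edist x y a b.

Definition approx_flag (eps : R) (k : nat) (a b : R) (col : R -> R -> nat) : Prop :=
  forall (z : nat), (1 <= z <= k)%nat ->
  forall x y, agent a b x y ->
    ((((INR z - 1) / INR k + eps) * a <= x <= (INR z / INR k - eps) * a) ->
        col x y = z) /\
    (col x y = z ->
        ((INR z - 1) / INR k - eps) * a <= x <= (INR z / INR k + eps) * a).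

Definition conc_coloring (g : R -> R) (F : R -> R -> R -> R -> nat) (a b : R)
  : R -> R -> nat :=
  fun x y => F (g (edist x y 0 0)) (g (edist x y a 0))
               (g (edist x y 0 b)) (g (edist x y a b)).

From Stdlib Require Import Reals Lra Psatz.
Open Scope R_scope.

(* An agent on the horizontal midline (x, h) of a flag of width
   a and height 2h is at distance sqrt (x^2 + h^2) from both left corners and
   sqrt ((a - x)^2 + h^2) from both right corners, so its colour depends only
   on these two numbers.  Two midline points of differently shaped flags with
   the same two numbers therefore receive the same colour.  We exhibit such a
   pair: the point x = 1/6 of a flag of width 1 (deep in the blue stripe), and
   the point xA = A/2 - 1/(3A) of a flag of width A and height 2 (for A large,
   xA/A is close to 1/2, far from the blue stripe).  The first must be blue
   by clause (1) of the flag definition, the second cannot be blue by clause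
   (2): contradiction. *)

Lemma edist_pos (x y px py : R) :
  0 < (x - px)^2 + (y - py)^2 -> 0 < edist x y px py.
Proof. intro H; unfold edist; apply sqrt_lt_R0; exact H. Qed.

(* Every point of the midline y = h of a flag of height 2h is an agent:
   it is at distance at least h from each corner. *)
Lemma agent_midline (a x h : R) :
  0 <= x <= a -> 0 < h -> agent a (2 * h) x h.
Proof.
  intros Hx Hh; repeat split; try lra; apply edist_pos; nra.
Qed.

Lemma conc_coloring_midline (g : R -> R) (F : R -> R -> R -> R -> nat)
    (a x h : R) :
  let dl := g (sqrt (x^2 + h^2)) in
  let dr := g (sqrt ((a - x)^2 + h^2)) in
  conc_coloring g F a (2 * h) x h = F dl dr dl dr.
Proof.
  unfold conc_coloring, edist.
  replace ((x - 0)^2 + (h - 0)^2) with (x^2 + h^2) by ring.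
  replace ((x - 0)^2 + (h - 2 * h)^2) with (x^2 + h^2) by ring.
  replace ((x - a)^2 + (h - 0)^2) with ((a - x)^2 + h^2) by ring.
  replace ((x - a)^2 + (h - 2 * h)^2) with ((a - x)^2 + h^2) by ring.
  reflexivity.
Qed.

Lemma approx_flag_blue_core (eps a b : R) (col : R -> R -> nat) (x y : R) :
  approx_flag eps 3 a b col -> agent a b x y ->
  eps * a <= x <= (1/3 - eps) * a -> col x y = 1%nat.
Proof.
  intros Hflag Hag Hx.
  apply (proj1 (Hflag 1%nat ltac:(lia) x y Hag)).
  simpl; lra.
Qed.

Lemma approx_flag_blue_bound (eps a b : R) (col : R -> R -> nat) (x y : R) :
  approx_flag eps 3 a b col -> agent a b x y ->
  col x y = 1%nat -> x <= (1/3 + eps) * a.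
Proof.
  intros Hflag Hag Hcol.
  destruct (proj2 (Hflag 1%nat ltac:(lia) x y Hag) Hcol) as [_ Hx].
  simpl in Hx; lra.
Qed.

(* The twin pair: in the flag of width A and height 2, the midline point
   xA = A/2 - 1/(3A) has the same distances to the left and to the right
   corners as the midline point 1/6 of the flag of width 1 and height 2h. *)
Lemma twin_midline_points (A : R) :
  0 < A ->
  let xA := A / 2 - 1 / (3 * A) in
  let h := sqrt (xA^2 + 35/36) in
  xA^2 + 1^2 = (1/6)^2 + h^2 /\ (A - xA)^2 + 1^2 = (1 - 1/6)^2 + h^2.
Proof.
  intros HA xA h.
  assert (Hh : h^2 = xA^2 + 35/36)
    by (unfold h; rewrite <- Rsqr_pow2; apply Rsqr_sqrt; nra).
  rewrite Hh; unfold xA; split; field; lra.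
Qed.

Lemma twin_point_not_blue (eps : R) :
  0 < eps < 1/6 ->
  let A := 2 / (1/6 - eps) in
  let xA := A / 2 - 1 / (3 * A) in
  0 < A /\ 0 <= xA <= A /\ (1/3 + eps) * A < xA.
Proof.
  intros Heps A xA.
  assert (HpA : (1/6 - eps) * A = 2) by (unfold A; field; lra).
  assert (HA : 12 < A) by nra.
  assert (HxA : 3 * A * xA = 3/2 * A^2 - 1) by (unfold xA; field; lra).
  repeat split; nra.
Qed.

Theorem theorem2 :
  forall (eps : R), 0 < eps < 1/6 ->
  forall (g : R -> R), (forall d, 0 < d -> 0 < g d) ->
  ~ (exists F : R -> R -> R -> R -> nat,
       (forall u1 u2 u3 u4, 0 < u1 -> 0 < u2 -> 0 < u3 -> 0 < u4 ->
          (1 <= F u1 u2 u3 u4 <= 3)%nat) /\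
       (forall a b, 0 < a -> 0 < b ->
          approx_flag eps 3 a b (conc_coloring g F a b))).
Proof.
  intros eps Heps g _ [F [_ Hflag]].
  destruct (twin_point_not_blue eps Heps) as (HA & HxA & Hfar).
  set (A := 2 / (1/6 - eps)) in *; set (xA := A / 2 - 1 / (3 * A)) in *.
  set (h := sqrt (xA^2 + 35/36)).
  assert (Hh : 0 < h) by (apply sqrt_lt_R0; nra).
  destruct (twin_midline_points A HA) as [Eleft Eright]; fold xA h in Eleft, Eright.
  assert (Hblue : conc_coloring g F 1 (2 * h) (1/6) h = 1%nat).
  { apply (approx_flag_blue_core eps 1 (2 * h)).
    - apply Hflag; lra.
    - apply agent_midline; lra.
    - lra. }
  assert (Htwin : conc_coloring g F A (2 * 1) xA 1 = 1%nat).
  { transitivity (conc_coloring g F 1 (2 * h) (1/6) h); [| exact Hblue].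
    rewrite !conc_coloring_midline, Eleft, Eright; reflexivity. }
  apply (approx_flag_blue_bound eps A (2 * 1)) in Htwin;
    [lra | apply Hflag; lra | apply agent_midline; lra].
Qed.
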